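(* For every graph $G$ and every integer $r\ge 2$, $$\mathrm{glm}(G)\le \mathrm{had}(G\square K_2)\le 3\,\mathrm{had}_r(G),$$ and if $r$ is even then $$\mathrm{glm}(G)\le \mathrm{had}(G\square K_2)\le 2\,\mathrm{had}_r(G)\le 2\,\mathrm{had}_f(G).$$
   Context: $\mathrm{had}(H)$ is the largest $t$ such that $K_t$ is a minor of $H$. $G\square K_2$ is the Cartesian product: two disjoint copies of $G$ with an edge between each pair of corresponding vertices. A grid-like-minor of order $t$ in $G$ is a set $\mathcal P$ of paths in $G$ whose intersection graph (vertices $\mathcal P$, two paths adjacent if they share a vertex) is bipartite and contains a $K_t$-minor; $\mathrm{glm}(G)$ is the maximum order of a grid-like-minor of $G$. Two subgraphs touch if they share a vertex or an edge joins them; a bramble is a set of pairwise touching connected subgraphs. The fractional Hadwiger number $\mathrm{had}_f(G)$ is the maximum $h$ for which there is a bramble $\mathcal B$ in $G$ and a weight function $w:\mathcal B\to\mathbb R_{\ge0}$ with $h=\sum_{X\in\mathcal B}w(X)$ and, for each vertex $v$, the total weight of elements of $\mathcal B$ containing $v$ at most $1$. For a positive integer $r$, $\mathrm{had}_r(G)$ is defined identically except that all weights must be multiples of $\frac1r$. *)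

From HB Require Import structures.
From mathcomp Require Import all_boot all_order all_algebra.
From mathcomp Require Import boolp classical_sets reals.
Set Implicit Arguments. Unset Strict Implicit. Unset Printing Implicit Defensive.
Import Order.TTheory GRing.Theory Num.Theory.

(* A (finite simple) graph is given by a vertex type T : finType and a
   symmetric irreflexive adjacency relation e : rel T. *)

Section Graphs.
Variables (T : finType) (e : rel T).

Definition connected_set (X : {set T}) : bool :=
  (X != finset.set0) &&
  [forall x in X, forall y in X,
     connect (fun a b => [&& e a b, a \in X & b \in X]) x y].

Definition Kt_minor (t : nat) : bool :=
  [exists f : {ffun 'I_t -> {set T}},
     [forall i, connected_set (f i)] &&
     [forall i, forall j, (i != j) ==>
        ([disjoint f i & f j] &&
         [exists x in f i, exists y in f j, e x y])]].

(* had(G): largest t with a K_t minor (such t is at most #|T|). *)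
Definition had : nat := \max_(t < #|T|.+1 | Kt_minor t) t.

Definition touch (X Y : {set T}) : bool :=
  [exists x in X, exists y in Y, (x == y) || e x y].

Definition bramble (B : {set {set T}}) : bool :=
  [forall X in B, connected_set X] && [forall X in B, forall Y in B, touch X Y].

Definition gpath (p : seq T) : bool :=
  if p is x :: s then uniq p && path e x s else false.

End Graphs.

Definition boxK2 (T : finType) (e : rel T) : rel (T * bool) :=
  fun p q => ((p.2 == q.2) && e p.1 q.1) || ((p.1 == q.1) && (p.2 != q.2)).

(* A grid-like minor of order t: a (finite) set of paths, here indexed
   injectively by 'I_m, whose intersection graph is bipartite and has a
   K_t minor. *)
Definition has_glm (T : finType) (e : rel T) (t : nat) : Prop :=
  exists (m : nat) (P : 'I_m -> seq T),
    injective P /\ (forall i, gpath e (P i)) /\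
    let adj : rel 'I_m := fun i j => (i != j) && has (fun x => x \in P j) (P i) in
    (exists c : 'I_m -> bool, forall i j, adj i j -> c i != c j) /\
    Kt_minor adj t.

Local Open Scope ring_scope.

Definition glm (R : realType) (T : finType) (e : rel T) : R :=
  sup [set x : R | exists t : nat, has_glm e t /\ x = t%:R].

Definition bramble_weight (R : realType) (T : finType) (e : rel T)
  (B : {set {set T}}) (w : {set T} -> R) : Prop :=
  bramble e B /\ (forall X, X \in B -> 0 <= w X) /\
  (forall v : T, \sum_(X in B | v \in X) w X <= 1).

Definition had_f (R : realType) (T : finType) (e : rel T) : R :=
  sup [set h : R | exists (B : {set {set T}}) (w : {set T} -> R),
         bramble_weight e B w /\ h = \sum_(X in B) w X].

Definition had_r (R : realType) (T : finType) (e : rel T) (r : nat) : R :=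
  sup [set h : R | exists (B : {set {set T}}) (w : {set T} -> R),
         bramble_weight e B w /\
         (forall X, X \in B -> exists k : nat, w X = k%:R / r%:R) /\
         h = \sum_(X in B) w X].

From HB Require Import structures.
From mathcomp Require Import all_boot all_order all_algebra.
From mathcomp Require Import boolp classical_sets reals.
From mathcomp Require Import zify.
Import Order.TTheory GRing.Theory Num.Theory.
Set Implicit Arguments. Unset Strict Implicit.

(* A grid-like minor lifts to G □ K_2: draw each path in the copy of G named by
   its colour in a proper 2-colouring of the intersection graph; intersecting
   paths then get joined by rungs, while paths of different branch sets stay
   disjoint. Conversely, the projections to G of the branch sets of a K_t minor
   of G □ K_2 are connected and pairwise touching, and every vertex of G lies in
   at most two of them, since it has two copies. Giving each projection weight
   k/r with k = r/2 rounded down yields a bramble weighting of total t k / r,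
   which is at least t/3, and exactly t/2 when r is even. *)

Lemma homo_connect (T U : finType) (e : rel T) (E : rel U) (f : T -> U) :
  {homo f : a b / e a b >-> connect E a b} ->
  {homo f : a b / connect e a b >-> connect E a b}.
Proof.
move=> fE x _ /connectP[p pth ->]; elim: p x pth => [|y p IHp] x //=.
by case/andP=> /fE exy /IHp; exact: connect_trans.
Qed.

Section InducedSubgraph.
Variables (T : finType) (e : rel T).

Definition induced (X : {set T}) : rel T := fun a b => [&& e a b, a \in X & b \in X].

Lemma connected_setP (X : {set T}) :
  reflect (X != finset.set0 /\ {in X &, forall x y, connect (induced X) x y})
          (connected_set e X).
Proof.
apply: (iffP andP) => [[nX /forall_inP cX] | [nX cX]]; split=> //.
  by move=> x y Xx Xy; exact: forall_inP (cX x Xx) y Xy.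
by apply/forall_inP => x Xx; apply/forall_inP => y Xy; exact: cX.
Qed.

End InducedSubgraph.

Section Connectivity.
Variables (T : finType) (e : rel T).

Lemma connect_induced_sub (X Y : {set T}) :
  X \subset Y -> subrel (connect (induced e X)) (connect (induced e Y)).
Proof.
move=> sXY; apply: connect_sub => a b /and3P[eab Xa Xb].
by apply: connect1; rewrite /induced eab !(fintype.subsetP sXY).
Qed.

Lemma connected_set_homo (U : finType) (E : rel U) (f : T -> U) (X : {set T}) :
  {in X &, forall a b, e a b -> (f a == f b) || E (f a) (f b)} ->
  connected_set e X -> connected_set E (f @: X).
Proof.
move=> fE /connected_setP[/set0Pn[x0 Xx0] cX]; apply/connected_setP; split.
  by apply/set0Pn; exists (f x0); rewrite imset_f.
move=> _ _ /imsetP[x Xx ->] /imsetP[y Xy ->].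
apply: homo_connect (cX x y Xx Xy) => a b /and3P[eab Xa Xb].
case/orP: (fE a b Xa Xb eab) => [/eqP-> | Efab]; first exact: connect0.
by apply: connect1; rewrite /induced Efab !imset_f.
Qed.

Lemma connected_set_gpath (p : seq T) :
  symmetric e -> gpath e p -> connected_set e [set x in p].
Proof.
case: p => [|x s] //= esym /andP[_ exs]; apply/connected_setP.
set X := [set y in x :: s]; split.
  by apply/set0Pn; exists x; rewrite inE mem_head.
have Xs : all [in X] (x :: s) by apply/allP => y sy; rewrite inE.
have pX : path (induced e X) x s.
  apply: sub_in_path Xs exs => a b Xa Xb eab; exact/and3P.
have symX : connect_sym (induced e X).
  by apply: sym_connect_sym => a b; rewrite /induced esym [(a \in X) && _]andbC.
move=> y z; rewrite !finset.in_set => sy sz.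
apply: (@connect_trans _ _ x); last exact: path_connect pX _ sz.
by rewrite symX; exact: path_connect pX _ sy.
Qed.

Lemma connected_bigcup (I : finType) (adj : rel I) (S : {set I})
    (F : I -> {set T}) :
  connected_set adj S -> {in S, forall i, connected_set e (F i)} ->
  {in S &, forall i j, adj i j -> touch e (F i) (F j)} ->
  connected_set e (\bigcup_(i in S) F i).
Proof.
move=> /connected_setP[/set0Pn[i0 Si0] cS] cF tF; apply/connected_setP.
set U := \bigcup_(i in S) F i.
have within i : i \in S -> {in F i &, forall x y, connect (induced e U) x y}.
  move=> Si x y Fx Fy; apply: (connect_induced_sub (finset.bigcup_sup i Si)).
  by case/connected_setP: (cF i Si) => _; apply.
split.
  have /connected_setP[/set0Pn[x Fx] _] := cF i0 Si0.
  by apply/set0Pn; exists x; apply/finset.bigcupP; exists i0.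
move=> x y /finset.bigcupP[i Si Fx] /finset.bigcupP[j Sj Fy].
case/connectP: (cS i j Si Sj) => p; elim: p i Si x Fx => [|k p IHp] i Si x Fx /=.
  by move=> _ eji; rewrite eji in Fy; exact: within i Si x y Fx Fy.
case/andP=> /and3P[aik _ Sk] pk lastp.
have /existsP[u /andP[Fu /existsP[v /andP[Fv uv]]]] := tF i k Si Sk aik.
apply: connect_trans (within i Si x u Fx Fu) _.
apply: connect_trans _ (IHp k Sk v Fv pk lastp).
case/orP: uv => [/eqP-> | euv]; first exact: connect0.
by apply: connect1; rewrite /induced euv /=; apply/andP; split; apply/finset.bigcupP;
  [exists i | exists k].
Qed.

End Connectivity.

Section Layers.
Variables (T : finType) (m : nat) (P : 'I_m -> seq T) (c : 'I_m -> bool).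

Definition layer (p : 'I_m) : {set T * bool} :=
  [set (u, c p) | u in [set x in P p]].

Lemma mem_layer p u b : ((u, b) \in layer p) = (u \in P p) && (b == c p).
Proof.
apply/imsetP/andP => [[v Pv [-> ->]] | [Pu /eqP->]].
  by rewrite finset.in_set in Pv; rewrite Pv eqxx.
by exists u; rewrite ?finset.in_set.
Qed.

Lemma connected_layer (e : rel T) p :
  symmetric e -> gpath e (P p) -> connected_set (boxK2 e) (layer p).
Proof.
move=> esym gP; apply: connected_set_homo (connected_set_gpath esym gP).
by move=> a b _ _ eab; rewrite /boxK2 /= eqxx eab orbT.
Qed.

Lemma boxK2_layer_edge (e : rel T) p q v :
  v \in P p -> v \in P q -> c p != c q ->
  exists2 x, x \in layer p & exists2 y, y \in layer q & boxK2 e x y.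
Proof.
move=> Pv Qv cpq; exists (v, c p); first by rewrite mem_layer Pv eqxx.
exists (v, c q); first by rewrite mem_layer Qv eqxx.
by rewrite /boxK2 /= eqxx cpq orbT.
Qed.

End Layers.

Lemma Kt_minor_boxK2_of_glm (T : finType) (e : rel T) (t : nat) :
  symmetric e -> has_glm e t -> Kt_minor (boxK2 e) t.
Proof.
move=> esym [m [P [_ [gP [[c col] /existsP[f /andP[/forallP cf /forallP df]]]]]]].
set adj := fun i j : 'I_m => _ in col df cf.
have edge p q : adj p q ->
    exists2 x, x \in layer P c p & exists2 y, y \in layer P c q & boxK2 e x y.
  move=> apq; case/andP: (apq) => _ /hasP[v Pv Qv].
  exact: boxK2_layer_edge Pv Qv (col p q apq).
apply/existsP; exists [ffun i => \bigcup_(p in f i) layer P c p].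
apply/andP; split; apply/forallP => i; rewrite ?ffunE.
  apply: connected_bigcup (cf i) _ _ => [p _ | p q _ _ /edge[x lx [y ly exy]]].
    exact: connected_layer.
  by apply/existsP; exists x; rewrite lx; apply/existsP; exists y; rewrite ly exy orbT.
apply/forallP => j; apply/implyP => nij; rewrite !ffunE.
have /andP[dij /exists_inP[p fip /exists_inP[q fjq /edge[x lx [y ly exy]]]]] :=
  implyP (forallP (df i) j) nij.
apply/andP; split.
  rewrite -setI_eq0; apply/eqP/setP => -[u b]; rewrite finset.in_set0.
  apply/negbTE/negP => /finset.setIP[/finset.bigcupP[p' fip' lp']].
  move=> /finset.bigcupP[q' fjq' lq'].
  move: lp' lq'; rewrite !mem_layer => /andP[Pu /eqP->] /andP[Qu cpq].
  have npq : p' != q' by apply: contraTneq fjq' => <-; rewrite (disjointFr dij fip').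
  have : adj p' q' by rewrite /adj npq; apply/hasP; exists u.
  by move/col; rewrite cpq.
apply/exists_inP; exists x; first by apply/finset.bigcupP; exists p.
by apply/exists_inP; exists y => //; apply/finset.bigcupP; exists q.
Qed.

Lemma card_mem_disjoint_family_le1 (I U : finType) (f : I -> {set U}) (x : U) :
  (forall i j, i != j -> [disjoint f i & f j]) -> (#|[set i | x \in f i]| <= 1)%N.
Proof.
move=> df; apply/card_le1P => i; rewrite finset.in_set => fi_x j; rewrite finset.in_set.
apply/idP/eqP => [fj_x | -> //]; apply/eqP; apply: contraTT fj_x => nji.
by rewrite (disjointFl (df _ _ nji) fi_x).
Qed.

Section Projection.
Variables (T : finType) (e : rel T).

Lemma connected_set_fst (X : {set T * bool}) :
  connected_set (boxK2 e) X -> connected_set e [set x.1 | x in X].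
Proof.
apply: connected_set_homo => -[a i] [b j] _ _.
by rewrite /boxK2 /= => /orP[/andP[_ ->] | /andP[-> _]]; rewrite ?orbT.
Qed.

Lemma Kt_minor_boxK2_project (t : nat) : Kt_minor (boxK2 e) t ->
  exists F : 'I_t -> {set T},
    [/\ forall i, connected_set e (F i), forall i j, touch e (F i) (F j)
      & forall v, (#|[set i | v \in F i]| <= 2)%N].
Proof.
case/existsP=> f /andP[/forallP cf /forallP df].
have dis i j : i != j -> [disjoint f i & f j].
  by move=> nij; case/andP: (implyP (forallP (df i) j) nij).
exists (fun i => [set x.1 | x in f i]); split=> [i | i j | v].
- exact: connected_set_fst.
- have [<- | nij] := eqVneq i j.
    have /connected_setP[/set0Pn[x fi_x] _] := cf i.
    by apply/exists_inP; exists x.1; rewrite ?imset_f //; apply/exists_inP;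
      exists x.1; rewrite ?imset_f ?eqxx.
  have /andP[_ /exists_inP[x fi_x /exists_inP[y fjy exy]]] :=
    implyP (forallP (df i) j) nij.
  apply/exists_inP; exists x.1; first exact: imset_f.
  apply/exists_inP; exists y.1; first exact: imset_f.
  by case/orP: exy => /andP[] => [_ -> | -> _]; rewrite ?orbT.
- have sub : [set i | v \in [set x.1 | x in f i]] \subset
             [set i | (v, true) \in f i] :|: [set i | (v, false) \in f i].
    apply/fintype.subsetP => i; rewrite !finset.in_set => /imsetP[[u b] fiub /= ->].
    by case: b fiub => ->; rewrite ?orbT.
  apply: leq_trans (subset_leq_card sub) _; apply: leq_trans (leq_card_setU _ _).1 _.
  by rewrite -[2]/(1 + 1)%N leq_add // card_mem_disjoint_family_le1.
Qed.

End Projection.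

Local Open Scope ring_scope.

Section FamilyBramble.
Variables (R : realType) (T : finType) (e : rel T) (I : finType) (F : I -> {set T}).

(* A family may repeat members; a repeated member gets the sum of its weights. *)
Definition family_weight (c : R) (X : {set T}) : R := #|[set i | F i == X]|%:R * c.

Lemma sum_family_weight (c : R) (Q : pred {set T}) :
  \sum_(X in F @: [set: I] | Q X) family_weight c X = #|[set i | Q (F i)]|%:R * c.
Proof.
rewrite -mulr_suml -natr_sum -sum1_card; congr (_%:R * c).
rewrite (partition_big F (fun X => (X \in F @: [set: I]) && Q X)) => [|i]; last first.
  by rewrite finset.in_set => Qi; rewrite imset_f ?finset.in_setT.
apply: eq_bigr => X /andP[_ QX]; rewrite -sum1_card; apply: eq_bigl => i.
by rewrite !finset.in_set; case: eqP => [-> | _]; rewrite ?QX ?andbF.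
Qed.

Lemma bramble_weight_family (c : R) (d : nat) :
  (forall i, connected_set e (F i)) -> (forall i j, touch e (F i) (F j)) ->
  0 <= c -> d%:R * c <= 1 -> (forall v, #|[set i | v \in F i]| <= d)%N ->
  bramble_weight e (F @: [set: I]) (family_weight c).
Proof.
move=> cF tF c0 dc1 Fd; split; [apply/andP; split | split].
- by apply/forall_inP => _ /imsetP[i _ ->].
- by apply/forall_inP => _ /imsetP[i _ ->]; apply/forall_inP => _ /imsetP[j _ ->].
- by move=> X _; rewrite mulr_ge0.
- move=> v; rewrite (sum_family_weight c (fun X => v \in X)).
  by apply: le_trans dc1; rewrite ler_wpM2r // ler_nat.
Qed.

End FamilyBramble.

Section HadwigerNumbers.
Variables (T : finType) (e : rel T).

Lemma Kt_minor0 : Kt_minor e 0.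
Proof.
by apply/existsP; exists [ffun=> finset.set0]; apply/andP; split; apply/forallP => -[].
Qed.

Lemma Kt_minor_le_card (t : nat) : Kt_minor e t -> (t <= #|T|)%N.
Proof.
case/existsP=> f /andP[/forallP cf /forallP df].
have pick i : {x | x \in f i} by apply: sigW; case/andP: (cf i) => /set0Pn.
rewrite -[t in (t <= _)%N]card_ord; apply: (@leq_card _ _ (fun i => sval (pick i))).
move=> i j /= eq_ij; apply/eqP; apply: contraT => nij.
have /andP[dij _] := implyP (forallP (df i) j) nij.
by move: (svalP (pick j)); rewrite -eq_ij (disjointFr dij (svalP (pick i))).
Qed.

Lemma Kt_minor_le_had (t : nat) : Kt_minor e t -> (t <= had e)%N.
Proof.
move=> Kt; have t_lt : (t < #|T|.+1)%N by rewrite ltnS Kt_minor_le_card.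
exact: (leq_bigmax_cond (F := val) (Ordinal t_lt)).
Qed.

Lemma Kt_minor_had : Kt_minor e (had e).
Proof.
have : (0 < #|[pred i : 'I_#|T|.+1 | Kt_minor e i]|)%N.
  by apply/card_gt0P; exists ord0; exact: Kt_minor0.
by case/(eq_bigmax_cond val) => i Ki; rewrite /had => ->.
Qed.

End HadwigerNumbers.

Section GraphParameters.
Variables (R : realType) (T : finType) (e : rel T).

Lemma has_glm0 : has_glm e 0.
Proof.
exists 0%N, (fun=> [::]); split; first by case.
by split; [case | split; [exists (fun=> true); case | exact: Kt_minor0]].
Qed.

Lemma glm_le_had_boxK2 : symmetric e -> glm R e <= (had (boxK2 e))%:R.
Proof.
move=> esym; apply: ge_sup; first by exists 0, 0%N; split; [exact: has_glm0|].
move=> _ [t [gt ->]]; rewrite ler_nat.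
exact/Kt_minor_le_had/Kt_minor_boxK2_of_glm.
Qed.

Lemma bramble_weight_sum_le_card (B : {set {set T}}) (w : {set T} -> R) :
  bramble_weight e B w -> \sum_(X in B) w X <= #|T|%:R.
Proof.
case=> /andP[/forall_inP cB _] [w0 load].
apply: (@le_trans _ _ (\sum_(X in B) \sum_(v in X) w X)).
  apply: ler_sum => X BX; rewrite sumr_const.
  have /connected_setP[/set0Pn[x Xx] _] := cB X BX.
  have : (0 < #|X|)%N by apply/card_gt0P; exists x.
  by case: #|X| => // n _; rewrite mulrS lerDl mulrn_wge0 ?w0.
rewrite (exchange_big_dep predT) //=.
by apply: le_trans (ler_sum _ (fun v _ => load v)) _; rewrite sumr_const.
Qed.

Lemma had_r_ge (r : nat) (B : {set {set T}}) (w : {set T} -> R) :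
  bramble_weight e B w -> (forall X, X \in B -> exists k : nat, w X = k%:R / r%:R) ->
  \sum_(X in B) w X <= had_r R e r.
Proof.
move=> Bw wr; apply: ub_le_sup; last by exists B, w.
exists #|T|%:R => _ [B' [w' [Bw' [_ ->]]]]; exact: bramble_weight_sum_le_card.
Qed.

Lemma bramble_weight0 : bramble_weight e finset.set0 (fun=> 0 : R).
Proof.
split; first by apply/andP; split; apply/forall_inP => X; rewrite finset.in_set0.
by split=> // v; rewrite big1.
Qed.

Lemma had_r_le_had_f (r : nat) : had_r R e r <= had_f R e.
Proof.
apply: sup_le.
- move=> _ [B [w [Bw [_ ->]]]]; apply/downP.
  by exists (\sum_(X in B) w X) => //; exists B, w.
- exists 0, finset.set0, (fun=> 0); split; first exact: bramble_weight0.
  by split=> [X | ]; rewrite ?finset.in_set0 ?big_set0.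
- split; first by exists 0, finset.set0, (fun=> 0); rewrite big_set0; split=> //;
    exact: bramble_weight0.
  exists #|T|%:R => _ [B [w [Bw ->]]]; exact: bramble_weight_sum_le_card.
Qed.

Lemma had_boxK2_le_had_r (n k r : nat) :
  symmetric e -> (0 < r)%N -> (2 * k <= r <= n * k)%N ->
  (had (boxK2 e))%:R <= n%:R * had_r R e r.
Proof.
move=> esym r0 /andP[kr rk]; set t := had (boxK2 e).
have r0' : 0 < r%:R :> R by rewrite ltr0n.
have [F [cF tF F2]] := Kt_minor_boxK2_project (Kt_minor_had (boxK2 e)).
set c : R := k%:R / r%:R.
have Bw : bramble_weight e (F @: [set: 'I_t]) (family_weight F c).
  apply: bramble_weight_family cF tF _ _ F2; first by rewrite divr_ge0.
  by rewrite mulrA ler_pdivrMr // mul1r -natrM ler_nat.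
have sum_w : \sum_(X in F @: [set: 'I_t]) family_weight F c X = t%:R * c.
  rewrite -[t in RHS]card_ord -cardsT -(sum_family_weight F c predT).
  by apply: eq_bigl => X; rewrite andbT.
have w_r X : X \in F @: [set: 'I_t] ->
    exists m : nat, family_weight F c X = m%:R / r%:R.
  case/imsetP=> i _ ->; exists (#|[set j | F j == F i]| * k)%N.
  by rewrite /family_weight /c natrM mulrA.
have := had_r_ge Bw w_r; rewrite sum_w => le_had_r.
apply: le_trans (ler_wpM2l (ler0n _ n) le_had_r).
by rewrite mulrCA ler_peMr // mulrA ler_pdivlMr // mul1r -natrM ler_nat.
Qed.

End GraphParameters.

Theorem lemma20 (R : realType) (T : finType) (e : rel T)
  (esym : symmetric e) (eirr : irreflexive e) (r : nat) (hr : (2 <= r)%N) :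
  glm R e <= (had (boxK2 e))%:R /\
  (had (boxK2 e))%:R <= 3 * had_r R e r /\
  (~~ odd r ->
     (had (boxK2 e))%:R <= 2 * had_r R e r /\
     2 * had_r R e r <= 2 * had_f R e).
Proof.
have r0 : (0 < r)%N by apply: leq_trans hr.
split; first exact: glm_le_had_boxK2.
split.
  by apply: (@had_boxK2_le_had_r R T e 3 r./2 r) => //; apply/andP; split; lia.
move=> r_even; split.
  by apply: (@had_boxK2_le_had_r R T e 2 r./2 r) => //; apply/andP; split; lia.
by rewrite ler_wpM2l // had_r_le_had_f.
Qed.
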